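(* For every integer $N\ge 0$, let $T_{1\times 3}(4,N)$ be the number of tilings of a $4\times n$ rectangle, $n=3N/4$, by $N$ tiles of size $1\times 3$ (and $T_{1\times 3}(4,N)=0$ if $3N/4\notin\mathbb{Z}$). Then, as formal power series, \[ \sum_{N\ge 0} T_{1\times 3}(4,N)\,z^N=\frac{(1-z)^2(1+z)^2(1+z^2)^2}{1-5z^4+3z^8-z^{12}}. \]
   Context: A tiling of an $m\times n$ rectangle (width $m$, length $n$, made of $mn$ unit squares) by $a\times b$ tiles is a partition of the rectangle into non-overlapping axis-parallel $a\times b$ rectangles with integer corner coordinates, each placed in either of its two orientations. Tilings related by reflections or rotations of the rectangle are counted as distinct. The empty tiling counts once for $N=0$. *)

From mathcomp Require Import all_boot all_order all_algebra.
Set Implicit Arguments. Unset Strict Implicit. Unset Printing Implicit Defensive.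
Import GRing.Theory.

(* Cells of an m x n rectangle (width m, length n): pairs (row, column). *)
Definition cell (m n : nat) := ('I_m * 'I_n)%type.

Definition rect (m n : nat) (i j h w : nat) : {set cell m n} :=
  [set c : cell m n | (i <= c.1 < i + h) && (j <= c.2 < j + w)].

Definition is_tile (m n a b : nat) (B : {set cell m n}) : bool :=
  [exists i : 'I_m, exists j : 'I_n,
     ((B == rect m n i j a b) && (i + a <= m) && (j + b <= n))
  || ((B == rect m n i j b a) && (i + b <= m) && (j + a <= n))].

Definition is_tiling (m n a b : nat) (P : {set {set cell m n}}) : bool :=
  partition P [set: cell m n] && [forall B in P, is_tile a b B].

Definition T13_4 (N : nat) : nat :=
  if 4 %| N then
    #|[set P : {set {set cell 4 (3 * N %/ 4)}} | is_tiling 1 3 P && (#|P| == N)]|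
  else 0.

Local Open Scope ring_scope.

Definition num13 : {poly int} :=
  (1 - 'X) ^+ 2 * (1 + 'X) ^+ 2 * (1 + 'X ^+ 2) ^+ 2.

Definition den13 : {poly int} :=
  1 - 5%:P * 'X ^+ 4 + 3%:P * 'X ^+ 8 - 'X ^+ 12.

From mathcomp Require Import all_boot all_order all_algebra.
From mathcomp Require Import zify ring.
Set Implicit Arguments. Unset Strict Implicit. Unset Printing Implicit Defensive.

(* Tilings of a 4 x n strip are built column by column: the
   leftmost, then topmost, free cell is the corner of the tile covering it, so
   that tile is either vertical, inside its column, or horizontal, sticking out
   into the next two columns.  The number h of tilings of a strip whose first two
   columns are partly filled therefore satisfies a linear recursion in the
   length, over the pairs of occupancy patterns of these two columns.  On a set
   of 15 such pairs closed under the recursion, the relation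
   h (k + 9) + 3 h (k + 3) = 5 h (k + 6) + h k, checked once, propagates to all
   k by linearity.  As T (4 K) = h (3 K) and T vanishes off multiples of 4, the
   series of T times den13 is a polynomial of degree < 12, which the first
   twelve values of T identify as num13. *)

Section Tilings.
Variables (T : finType) (tile : pred {set T}).

Definition tilings (S : {set T}) : {set {set {set T}}} :=
  [set P | partition P S && [forall B in P, tile B]].

Definition tiles_at (c : T) (S : {set T}) : {set {set T}} :=
  [set B | tile B && (c \in B) && (B \subset S)].

Lemma card_tilings0 : #|tilings set0| = 1.
Proof.
rewrite -(cards1 (set0 : {set {set T}})); apply: eq_card => P.
rewrite !inE partition_set0; case: eqP => [->|] //=.
by apply/forall_inP => B; rewrite inE.
Qed.

Section TileAt.
Variables (S B : {set T}) (c : T).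
Hypothesis tileB : B \in tiles_at c S.

Lemma notin_tilings_setD Q : Q \in tilings (S :\: B) -> B \notin Q.
Proof.
rewrite inE => /andP [Qp _]; apply/negP => /(partitionS Qp) /subsetP /(_ c).
move: tileB; rewrite inE => /andP [/andP [_ cB] _] /(_ cB).
by rewrite inE cB.
Qed.

Lemma tilings_pblockE :
  [set P in tilings S | pblock P c == B] = [set B |: Q | Q in tilings (S :\: B)].
Proof.
move: tileB; rewrite inE => /andP [/andP [tB cB] BS].
apply/setP => P; rewrite !inE; apply/andP/imsetP.
- move=> [/andP [Pp /forall_inP Pt] /eqP PcB].
  have BP : B \in P by rewrite -PcB pblock_mem // (cover_partition Pp) (subsetP BS).
  exists (P :\ B); last by rewrite setD1K.
  rewrite inE (partitionD1 Pp BP); apply/forall_inP => X /setD1P [_].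
  exact: Pt.
- move=> [Q]; rewrite inE => /andP [Qp /forall_inP Qt] ->.
  have B0 : B != set0 by apply/set0Pn; exists c.
  have dBS : [disjoint B & S :\: B] by rewrite disjoint_sym disjoints_subset subsetDr.
  have SBE : B :|: S :\: B = S by rewrite -{1}(setIidPr BS) setID.
  have Pp := partitionU1 Qp B0 dBS; rewrite SBE in Pp.
  rewrite (def_pblock (partition_trivIset Pp) (setU11 B Q) cB) eqxx Pp; split=> //.
  by apply/forall_inP => X /setU1P [-> //|]; apply: Qt.
Qed.
End TileAt.

Lemma card_tilings_at (S : {set T}) c : c \in S ->
  #|tilings S| = \sum_(B in tiles_at c S) #|tilings (S :\: B)|.
Proof.
move=> cS; rewrite -sum1_card.
rewrite (partition_big (fun P => pblock P c) (mem (tiles_at c S))) /=; last first.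
  move=> P; rewrite inE => /andP [Pp /forall_inP Pt].
  have cP : c \in cover P by rewrite (cover_partition Pp).
  by rewrite inE Pt ?pblock_mem // mem_pblock cP (partitionS Pp (pblock_mem cP)).
apply: eq_bigr => B tB; rewrite sum1dep_card.
transitivity #|[set P in tilings S | pblock P c == B]|.
  by apply: eq_card => P; rewrite !inE.
rewrite (tilings_pblockE tB) card_in_imset //.
move=> Q1 Q2 /(notin_tilings_setD tB) nB1 /(notin_tilings_setD tB) nB2 E.
by rewrite -(setU1K nB1) -(setU1K nB2) E.
Qed.

End Tilings.

(* Row [r] of a column of height 4 still has to be covered iff [mask_at m r]. *)
Definition colmask := (bool * bool * bool * bool)%type.

Definition mask_none : colmask := (false, false, false, false).
Definition mask_all : colmask := (true, true, true, true).

Definition mask_at (m : colmask) (r : nat) : bool :=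
  match r with 0 => m.1.1.1 | 1 => m.1.1.2 | 2 => m.1.2 | 3 => m.2 | _ => false end.

Definition mask_unset (m : colmask) (r : nat) : colmask :=
  (m.1.1.1 && (r != 0), m.1.1.2 && (r != 1), m.1.2 && (r != 2), m.2 && (r != 3)).

Definition mask_unset3 (m : colmask) (r : nat) : colmask :=
  mask_unset (mask_unset (mask_unset m r) r.+1) r.+2.

Definition mask_nonempty (m : colmask) : bool := [|| m.1.1.1, m.1.1.2, m.1.2 | m.2].

Definition mask_size (m : colmask) : nat := m.1.1.1 + m.1.1.2 + m.1.2 + m.2.

Definition first_row (m : colmask) : nat :=
  if m.1.1.1 then 0 else if m.1.1.2 then 1 else if m.1.2 then 2 else 3.

Lemma mask_at_unset m r x : mask_at (mask_unset m r) x = mask_at m x && (x != r).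
Proof.
by case: m => [[[a b] c] d]; case: x => [|[|[|[|x]]]] /=; rewrite ?andbF // eq_sym.
Qed.

Lemma mask_at_empty m x : ~~ mask_nonempty m -> mask_at m x = false.
Proof. by case: m => [[[[] []] []] []] // _; case: x => [|[|[|[|x]]]]. Qed.

Lemma first_row_lt m : first_row m < 4.
Proof. by rewrite /first_row; do 3?case: ifP. Qed.

Lemma mask_at_first_row m : mask_nonempty m -> mask_at m (first_row m).
Proof. by case: m => [[[[] []] []] []]. Qed.

Lemma first_row_min m x : mask_at m x -> first_row m <= x.
Proof. by case: m => [[[[] []] []] []]; case: x => [|[|[|[|x]]]]. Qed.

Lemma mask_size_unset_first m :
  mask_nonempty m -> mask_size (mask_unset m (first_row m)) < mask_size m.
Proof. by case: m => [[[[] []] []] []]. Qed.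

Lemma mask_size_unset3_first m :
  mask_nonempty m -> mask_size (mask_unset3 m (first_row m)) < mask_size m.
Proof. by case: m => [[[[] []] []] []]. Qed.

Definition vfits (m1 : colmask) : bool :=
  let r := first_row m1 in (r <= 1) && mask_at m1 r.+1 && mask_at m1 r.+2.

Definition hfits (m1 m2 m3 : colmask) : bool :=
  let r := first_row m1 in mask_at m2 r && mask_at m3 r.

(* All ways to cover the free cells of the first of three columns with masks
   [m1], [m2], [m3], recorded by the masks left on the other two columns;
   [fuel] bounds the number of tiles placed. *)
Fixpoint fill_column (fuel : nat) (m1 m2 m3 : colmask) : seq (colmask * colmask) :=
  if fuel is fuel'.+1 then
    if mask_nonempty m1 then
      let r := first_row m1 in
      (if vfits m1 then fill_column fuel' (mask_unset3 m1 r) m2 m3 else [::]) ++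
      (if hfits m1 m2 m3 then
         fill_column fuel' (mask_unset m1 r) (mask_unset m2 r) (mask_unset m3 r)
       else [::])
    else [:: (m2, m3)]
  else [:: (m2, m3)].

(* Number of tilings of a strip of [k] columns whose first two columns are
   restricted to the masks [a] and [b]; columns beyond the strip are empty. *)
Fixpoint strip_count (k : nat) (a b : colmask) : nat :=
  if k is k'.+1 then
    sumn [seq strip_count k' p.1 p.2 |
          p <- fill_column 4 a (if 1 <= k' then b else mask_none)
                               (if 2 <= k' then mask_all else mask_none)]
  else 1.

Lemma strip_countS k a b : 2 <= k ->
  strip_count k.+1 a b = \sum_(p <- fill_column 4 a b mask_all) strip_count k p.1 p.2.
Proof.
move=> k_ge2; rewrite /= (leq_trans _ k_ge2) // k_ge2.
by rewrite sumnE big_map.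
Qed.

Notation tilings13 n := (tilings (@is_tile 4 n 1 3)).

Definition col_mask (m1 m2 m3 : colmask) (d r : nat) : bool :=
  match d with 0 => mask_at m1 r | 1 => mask_at m2 r | 2 => mask_at m3 r | _ => true end.

Definition region (n j : nat) (m1 m2 m3 : colmask) : {set cell 4 n} :=
  [set c : cell 4 n | (j <= c.2) && col_mask m1 m2 m3 (c.2 - j) c.1].

Lemma in_rect m k i j a b (c : cell m k) :
  (c \in rect m k i j a b) = (i <= c.1 < i + a) && (j <= c.2 < j + b).
Proof. by rewrite inE. Qed.

Definition vtile n j m1 : {set cell 4 n} := rect 4 n (first_row m1) j 3 1.
Definition htile n j m1 : {set cell 4 n} := rect 4 n (first_row m1) j 1 3.

Section RegionSetD.
Variables (n j : nat) (m1 m2 m3 : colmask).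
Local Notation r := (first_row m1).
Local Notation S := (region n j m1 m2 m3).

Lemma region_setD_vtile : S :\: vtile n j m1 = region n j (mask_unset3 m1 r) m2 m3.
Proof.
apply/setP => [[x y]]; rewrite !inE /=.
case: (leqP j y) => [jy|]; last by rewrite !andbF.
have [d ->] : exists d, nat_of_ord y = j + d by exists (y - j); lia.
rewrite addKn ltn_add2l /=.
by case: x => [[|[|[|[|x]]]] ?] //=;
  case: m1 => [[[[] []] []] []] //=; case: d => [|[|[|d]]].
Qed.

Lemma region_setD_htile :
  S :\: htile n j m1 = region n j (mask_unset m1 r) (mask_unset m2 r) (mask_unset m3 r).
Proof.
apply/setP => [[x y]]; rewrite !inE /=.
case: (leqP j y) => [jy|]; last by rewrite !andbF.
have [d ->] : exists d, nat_of_ord y = j + d by exists (y - j); lia.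
rewrite addKn ltn_add2l /=.
by case: x => [[|[|[|[|x]]]] ?] //=; case: m1 => [[[[] []] []] []] //=;
  case: d => [|[|[|d]]]; rewrite //= ?andbF ?andbT.
Qed.

End RegionSetD.

Section FirstCell.
Variables (n j : nat) (j_lt_n : j < n) (m1 m2 m3 : colmask).
Local Notation r := (first_row m1).
Local Notation S := (region n j m1 m2 m3).
Local Notation vtile := (vtile n j m1).
Local Notation htile := (htile n j m1).

Definition first_cell : cell 4 n := (Ordinal (first_row_lt m1), Ordinal j_lt_n).

Lemma first_cell_in_region : mask_nonempty m1 -> first_cell \in S.
Proof. by move=> m1_nonempty; rewrite inE /= leqnn subnn /= mask_at_first_row. Qed.

Lemma mem_region_cell x y (x_lt4 : x < 4) (y_ltn : y < n) :
  ((Ordinal x_lt4, Ordinal y_ltn) : cell 4 n) \in S ->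
  j <= y /\ col_mask m1 m2 m3 (y - j) x.
Proof. by rewrite inE => /andP []. Qed.

(* [first_cell] is the least cell of [S] in column-major order, and the least
   cell of a rectangle is its corner. *)
Lemma corner_first_cell i j' a b : 0 < a -> 0 < b -> i < 4 -> j' < n ->
  first_cell \in rect 4 n i j' a b -> rect 4 n i j' a b \subset S ->
  i = r /\ j' = j.
Proof.
move=> a_gt0 b_gt0 i_lt4 j'_ltn; rewrite in_rect /= => cB /subsetP BS.
have /BS /mem_region_cell [jj' corner] : ((Ordinal i_lt4, Ordinal j'_ltn) : cell 4 n)
    \in rect 4 n i j' a b by rewrite in_rect /=; lia.
have ej : j' = j by lia.
move: corner; rewrite ej subnn /= => /first_row_min; lia.
Qed.

Lemma tiles_at_first_cell B : B \in tiles_at (@is_tile 4 n 1 3) first_cell S ->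
  (vfits m1 && (B == vtile)) || (hfits m1 m2 m3 && (B == htile)).
Proof.
rewrite inE => /andP [/andP [/existsP [i /existsP [j' tB]] cB] BS].
have r_lt4 := first_row_lt m1.
have maskB x y (x_lt4 : x < 4) (y_ltn : y < n) :
    ((Ordinal x_lt4, Ordinal y_ltn) : cell 4 n) \in B -> col_mask m1 m2 m3 (y - j) x.
  by move=> /(subsetP BS) /mem_region_cell [].
case/orP: tB => /andP [/andP [/eqP EB fit_i] fit_j]; rewrite EB in cB BS maskB *;
  have [] // := corner_first_cell _ _ (ltn_ord i) (ltn_ord j') cB BS => ei ej.
- have m2r : mask_at m2 r.
    have j1_ltn : j + 1 < n by lia.
    by move: (maskB _ _ r_lt4 j1_ltn); rewrite addKn; apply; rewrite in_rect /=; lia.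
  have m3r : mask_at m3 r.
    have j2_ltn : j + 2 < n by lia.
    by move: (maskB _ _ r_lt4 j2_ltn); rewrite addKn; apply; rewrite in_rect /=; lia.
  by rewrite /hfits /htile ei ej m2r m3r eqxx orbT.
- have m1r1 : mask_at m1 r.+1.
    have r1_lt4 : r.+1 < 4 by lia.
    by move: (maskB _ _ r1_lt4 j_lt_n); rewrite subnn; apply; rewrite in_rect /=; lia.
  have m1r2 : mask_at m1 r.+2.
    have r2_lt4 : r.+2 < 4 by lia.
    by move: (maskB _ _ r2_lt4 j_lt_n); rewrite subnn; apply; rewrite in_rect /=; lia.
  have r_le1 : r <= 1 by lia.
  by rewrite /vfits /vtile ei ej r_le1 m1r1 m1r2 eqxx.
Qed.

Lemma vtile_tiles_at : mask_nonempty m1 -> vfits m1 ->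
  vtile \in tiles_at (@is_tile 4 n 1 3) first_cell S.
Proof.
move=> m1_nonempty; rewrite /vfits => /andP [/andP [r_le1 m1r1] m1r2].
rewrite inE -andbA; apply/and3P; split.
- apply/existsP; exists (Ordinal (first_row_lt m1)); apply/existsP; exists (Ordinal j_lt_n).
  by rewrite /vtile eqxx /=; apply/orP; right; apply/andP; split; lia.
- by rewrite in_rect /=; lia.
- apply/subsetP => [[x y]]; rewrite in_rect inE /= => /andP [xr yj].
  have -> : nat_of_ord y = j by lia.
  rewrite leqnn subnn /=.
  have [->|[->|->]] : x = r :> nat \/ x = r.+1 :> nat \/ x = r.+2 :> nat by lia.
  + exact: mask_at_first_row.
  + exact: m1r1.
  + exact: m1r2.
Qed.

Lemma htile_tiles_at : mask_nonempty m1 -> (forall x, mask_at m3 x -> j.+2 < n) ->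
  hfits m1 m2 m3 -> htile \in tiles_at (@is_tile 4 n 1 3) first_cell S.
Proof.
move=> m1_nonempty m3_in_strip; rewrite /hfits => /andP [m2r m3r].
have j2_ltn := m3_in_strip _ m3r; have r_lt4 := first_row_lt m1.
rewrite inE -andbA; apply/and3P; split.
- apply/existsP; exists (Ordinal (first_row_lt m1)); apply/existsP; exists (Ordinal j_lt_n).
  by rewrite /htile eqxx /=; apply/orP; left; apply/andP; split; lia.
- by rewrite in_rect /=; lia.
- apply/subsetP => [[x y]]; rewrite in_rect inE /= => /andP [xr yj].
  have -> : nat_of_ord x = r by lia.
  have [->|[->|->]] : y = j :> nat \/ y = j.+1 :> nat \/ y = j.+2 :> nat by lia.
  + by rewrite leqnn subnn /= mask_at_first_row.
  + by rewrite leqnSn -addn1 addKn.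
  + by rewrite -addn2 leq_addr addKn.
Qed.

Lemma vtile_neq_htile : vfits m1 -> vtile != htile.
Proof.
rewrite /vfits => /andP [/andP [r_le1 _] _]; have r1_lt4 : r.+1 < 4 by lia.
apply/negP => /eqP vh.
have : ((Ordinal r1_lt4, Ordinal j_lt_n) : cell 4 n) \in vtile by rewrite in_rect /=; lia.
by rewrite vh in_rect /=; lia.
Qed.

End FirstCell.

Lemma region_mask_none n j m1 m2 m3 :
  ~~ mask_nonempty m1 -> region n j m1 m2 m3 = region n j mask_none m2 m3.
Proof.
move=> m1_empty; apply/setP => c; rewrite !inE; case: (c.2 - j) => [|d] //=.
by rewrite mask_at_empty //; case: c.1 => [[|[|[|[|x]]]] ?]; rewrite andbF.
Qed.

Lemma sum_nat_cond2 (I : finType) (F : I -> nat) (b1 b2 : bool) (x y : I) :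
  (b1 -> x != y) ->
  \sum_(z | (b1 && (z == x)) || (b2 && (z == y))) F z =
  (if b1 then F x else 0) + (if b2 then F y else 0).
Proof.
case: b1 b2 => [] [] /= xy; last exact: big_pred0.
- have {}xy := xy isT.
  rewrite (bigD1 x) ?eqxx //= (eq_bigl (pred1 y)) ?big_pred1_eq // => z /=.
  by case: (eqVneq z y) => [->|zy]; rewrite ?orbT ?orbF ?andbN //= eq_sym xy.
- by rewrite (eq_bigl (pred1 x)) ?big_pred1_eq ?addn0 // => z; rewrite orbF.
- exact: big_pred1_eq.
Qed.

Lemma card_region_tilings_first_cell n j (j_lt_n : j < n) m1 m2 m3 :
  mask_nonempty m1 -> (forall x, mask_at m3 x -> j.+2 < n) ->
  let r := first_row m1 in
  #|tilings13 n (region n j m1 m2 m3)| =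
  (if vfits m1 then #|tilings13 n (region n j (mask_unset3 m1 r) m2 m3)| else 0) +
  (if hfits m1 m2 m3 then
     #|tilings13 n (region n j (mask_unset m1 r) (mask_unset m2 r) (mask_unset m3 r))|
   else 0).
Proof.
move=> m1_nonempty m3_in_strip r.
rewrite (card_tilings_at _ (first_cell_in_region j_lt_n m2 m3 m1_nonempty)).
rewrite (eq_bigl (fun B => (vfits m1 && (B == vtile n j m1)) ||
                          (hfits m1 m2 m3 && (B == htile n j m1)))).
  rewrite sum_nat_cond2 ?region_setD_vtile ?region_setD_htile //.
  exact: vtile_neq_htile.
move=> B; apply/idP/idP; first exact: tiles_at_first_cell.
case/orP=> /andP [fit /eqP ->]; first exact: vtile_tiles_at.
exact: htile_tiles_at.
Qed.

Lemma card_region_tilings n j (j_lt_n : j < n) fuel m1 m2 m3 :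
  mask_size m1 <= fuel -> (forall x, mask_at m3 x -> j.+2 < n) ->
  #|tilings13 n (region n j m1 m2 m3)| =
  \sum_(p <- fill_column fuel m1 m2 m3) #|tilings13 n (region n j mask_none p.1 p.2)|.
Proof.
elim: fuel m1 m2 m3 => [|fuel IH] m1 m2 m3 size_m1 m3_in_strip /=.
  have m1_empty : ~~ mask_nonempty m1 by move: size_m1; case: m1 => [[[[] []] []] []].
  by rewrite big_seq1 region_mask_none.
have [m1_nonempty|m1_empty] := boolP (mask_nonempty m1); last first.
  by rewrite big_seq1 region_mask_none.
rewrite big_cat (card_region_tilings_first_cell j_lt_n) //; congr (_ + _).
  case: ifP => _; rewrite ?big_nil // IH //.
  by have := mask_size_unset3_first m1_nonempty; lia.
case: ifP => _; rewrite ?big_nil // IH //.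
- by have := mask_size_unset_first m1_nonempty; lia.
- by move=> x; rewrite mask_at_unset => /andP [/m3_in_strip].
Qed.

Lemma region_mask_none_shift n j a b :
  region n j mask_none a b = region n j.+1 a b mask_all.
Proof.
apply/setP => [[x y]]; rewrite !inE /=.
case: (leqP j y) => [jy|yj]; last by rewrite ltnNge ltnW.
have [d ->] : exists d, nat_of_ord y = j + d by exists (y - j); lia.
rewrite addKn; case: d => [|d]; first by rewrite addn0 ltnn; case: x => [[|[|[|[|x]]]] ?].
rewrite addnS ltnS leq_addr subSS addKn.
by case: d => [|[|[|d]]] //=; case: x => [[|[|[|[|x]]]] ?].
Qed.

(* Columns [j + 1] and [j + 2] may lie beyond the last column [n - 1]. *)
Lemma region_strip_end n j k a b : j + k.+1 = n ->
  region n j a b mask_all =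
  region n j a (if 1 <= k then b else mask_none) (if 2 <= k then mask_all else mask_none).
Proof.
move=> jk; apply/setP => [[x [y y_ltn]]]; rewrite !inE /=.
case: (leqP j y) => //= jy.
have [d yE] : exists d, y = j + d by exists (y - j); lia.
rewrite {}yE addKn in y_ltn *; case: d y_ltn => [|[|[|d]]] y_ltn //=.
- by case: ifP => // /negP k_eq0; exfalso; lia.
- by case: ifP => // /negP k_lt2; exfalso; lia.
Qed.

Lemma card_strip_tilings n k j a b : j + k = n ->
  #|tilings13 n (region n j a b mask_all)| = strip_count k a b.
Proof.
elim: k j a b => [|k IH] j a b jk.
  have -> : region n j a b mask_all = set0.
    by apply/setP => [[x [y y_ltn]]]; rewrite !inE /=; apply/negbTE; lia.
  exact: card_tilings0.
have j_ltn : j < n by lia.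
rewrite (region_strip_end a b (_ : j + k.+1 = n)) //.
rewrite (card_region_tilings j_ltn (fuel := 4)) /=.
- rewrite sumnE big_map; apply: eq_bigr => p _.
  by rewrite region_mask_none_shift IH //; lia.
- by case: a => [[[[] []] []] []].
- by case: ifP => k_ge2 x; [lia | rewrite mask_at_empty].
Qed.

Lemma card_interval m lo w : lo + w <= m -> #|[set x : 'I_m | lo <= x < lo + w]| = w.
Proof.
elim: w => [|w IH] lo_w_lem.
  by apply/eqP; rewrite cards_eq0; apply/eqP/setP => x; rewrite !inE addn0; apply/negbTE; lia.
have lo_w_ltm : lo + w < m by lia.
have -> : [set x : 'I_m | lo <= x < lo + w.+1] =
          Ordinal lo_w_ltm |: [set x : 'I_m | lo <= x < lo + w].
  by apply/setP => x; rewrite !inE -val_eqE /=; lia.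
by rewrite cardsU1 IH ?inE /= ?ltnn ?andbF //; lia.
Qed.

Lemma card_rect m k i j a b : i + a <= m -> j + b <= k -> #|rect m k i j a b| = a * b.
Proof.
move=> fit_a fit_b.
have -> : rect m k i j a b =
    setX [set x : 'I_m | i <= x < i + a] [set y : 'I_k | j <= y < j + b].
  by apply/setP => [[x y]]; rewrite !inE.
by rewrite cardsX !card_interval.
Qed.

Lemma card_tile m k a b (B : {set cell m k}) : is_tile a b B -> #|B| = a * b.
Proof.
case/existsP=> i /existsP [j /orP [] /andP [/andP [/eqP -> fit_i] fit_j]].
  by rewrite card_rect.
by rewrite card_rect // mulnC.
Qed.

Lemma card_tiling m k a b (P : {set {set cell m k}}) :
  is_tiling a b P -> a * b * #|P| = m * k.
Proof.
case/andP=> Pp /forall_inP Pt.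
have := card_partition Pp; rewrite cardsT card_prod !card_ord => ->.
by rewrite mulnC -sum_nat_const; apply: eq_bigr => B /Pt /card_tile.
Qed.

Lemma T13_4_strip_count N :
  T13_4 N = if 4 %| N then strip_count (3 * N %/ 4) mask_all mask_all else 0.
Proof.
rewrite /T13_4; case: ifP => // N_div4; set n := 3 * N %/ 4.
have regionT : region n 0 mask_all mask_all mask_all = setT.
  apply/setP => [[[[|[|[|[|x]]]] ?] y]]; rewrite !inE //= subn0;
  by case: (nat_of_ord y) => [|[|[|d]]].
rewrite -(@card_strip_tilings n n 0) // regionT.
apply: eq_card => P; rewrite !inE.
case tP: (is_tiling 1 3 P) => /=; last by move: tP; rewrite /is_tiling => ->.
have := card_tiling tP; move: tP => /andP [-> ->] /= areaP.
have n4 : 4 * n = 3 * N by rewrite /n mulnC divnK // dvdn_mull.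
by apply/eqP; lia.
Qed.

Section TransferRecurrence.
Variables (state : eqType) (next : state -> seq state) (f : nat -> state -> nat).
Variables (k0 : nat) (states : seq state).
Hypothesis f_step : forall k s, k0 <= k -> f k.+1 s = \sum_(p <- next s) f k p.
Hypothesis states_closed : all (fun s => all (mem states) (next s)) states.

Definition recurrence_at k s :=
  f (k + 9) s + 3 * f (k + 3) s == 5 * f (k + 6) s + f k s.

(* [f_step] writes [f k.+1 s] as a sum of [f k p] over states [p], and the
   relation is linear. *)
Lemma recurrence_at_succ k : k0 <= k ->
  all (recurrence_at k) states -> all (recurrence_at k.+1) states.
Proof.
move=> k0k /allP rec_k; apply/allP => s s_in; rewrite /recurrence_at !addSn.
rewrite !f_step ?(leq_trans k0k) ?leq_addr // !big_distrr -!big_split /=.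
apply/eqP/eq_big_seq => p p_next; apply/eqP/rec_k.
exact: (allP (allP states_closed s s_in)).
Qed.

Lemma recurrence_at_from k : k0 <= k ->
  all (recurrence_at k0) states -> all (recurrence_at k) states.
Proof.
move=> + rec0; elim: k => [|k IH]; first by rewrite leqn0 => /eqP <-.
rewrite leq_eqVlt => /orP [/eqP <- //|k0k].
by apply: recurrence_at_succ => //; apply: IH.
Qed.

End TransferRecurrence.

(* A set of pairs of masks containing [(mask_all, mask_all)] and closed under
   [fill_column]: on it the strip counts follow a finite transfer matrix. *)
Definition strip_states : seq (colmask * colmask) :=
  let z := mask_none in let o : colmask := (true, false, false, false) in
  let s : colmask := (true, true, true, false) in
  let e : colmask := (false, false, false, true) in
  let f : colmask := (false, true, true, true) in
  [:: (z, z); (z, o); (z, s); (z, e); (z, f); (z, mask_all); (o, o); (o, mask_all);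
      (s, s); (s, mask_all); (e, e); (e, mask_all); (f, f); (f, mask_all);
      (mask_all, mask_all)].

Lemma strip_states_closed :
  all (fun s => all (mem strip_states) (fill_column 4 s.1 s.2 mask_all)) strip_states.
Proof. by vm_compute. Qed.

Lemma strip_count_rec k : 2 <= k ->
  strip_count (k + 9) mask_all mask_all + 3 * strip_count (k + 3) mask_all mask_all =
  5 * strip_count (k + 6) mask_all mask_all + strip_count k mask_all mask_all.
Proof.
move=> k_ge2; apply/eqP.
pose next (s : colmask * colmask) := fill_column 4 s.1 s.2 mask_all.
pose f k (s : colmask * colmask) := strip_count k s.1 s.2.
have base : all (recurrence_at f 2) strip_states by vm_compute.
have step i s : 2 <= i -> f i.+1 s = \sum_(p <- next s) f i p by apply: strip_countS.
by have /allP/(_ (mask_all, mask_all) isT) := recurrence_at_from step strip_states_closed k_ge2 base.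
Qed.

Lemma T13_4_rec M :
  T13_4 (M + 12) + 3 * T13_4 (M + 4) = 5 * T13_4 (M + 8) + T13_4 M.
Proof.
rewrite !T13_4_strip_count !dvdn_addl //.
case: (boolP (4 %| M)) => [/dvdnP [K ->] | //].
have -> : 3 * (K * 4 + 12) %/ 4 = 3 * K + 9 by lia.
have -> : 3 * (K * 4 + 8) %/ 4 = 3 * K + 6 by lia.
have -> : 3 * (K * 4 + 4) %/ 4 = 3 * K + 3 by lia.
have -> : 3 * (K * 4) %/ 4 = 3 * K by lia.
case: K => [|K]; first by vm_compute.
by rewrite strip_count_rec //; lia.
Qed.

Import GRing.Theory.
Local Open Scope ring_scope.

Lemma num13E : num13 = 1 - 2%:P * 'X^4 + 'X^8.
Proof. by rewrite /num13; ring. Qed.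

Lemma coef_den13 k : den13`_k =
  (k == 0)%N%:R - 5 * (k == 4)%N%:R + 3 * (k == 8)%N%:R - (k == 12)%N%:R :> int.
Proof. by rewrite /den13 !coefB !coefD coef1 !coefN !coefCM !coefXn. Qed.

Lemma sum_indicator_mul (F : nat -> int) N c :
  \sum_(k < N.+1) (k == c :> nat)%:R * F k = F c *+ (c <= N)%N.
Proof.
have -> : F c *+ (c <= N)%N = if (c < N.+1)%N then F c else 0.
  by rewrite ltnS; case: leqP.
rewrite -(@big_ord1_eq int 0 +%R F c N.+1) [RHS]big_mkcond /=.
by apply: eq_bigr => k _; case: eqP => _; rewrite ?mul1r ?mul0r.
Qed.

Lemma den13_convolution (a : nat -> int) N :
  \sum_(k < N.+1) den13`_k * a (N - k)%N =
  a N - 5 * a (N - 4)%N *+ (4 <= N)%N + 3 * a (N - 8)%N *+ (8 <= N)%N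
      - a (N - 12)%N *+ (12 <= N)%N.
Proof.
under eq_bigr do rewrite coef_den13 mulrBl mulrDl mulrBl -!mulrA.
rewrite sumrB big_split sumrB -!mulr_sumr /=.
by rewrite !(sum_indicator_mul (fun k => a (N - k)%N)) subn0 !mulrnAr.
Qed.

Lemma coef_num13 N : num13`_N = (N == 0)%N%:R - 2 * (N == 4)%N%:R + (N == 8)%N%:R :> int.
Proof. by rewrite num13E !coefD coefN coef1 coefCM !coefXn. Qed.

Theorem mainTheorem1 :
  forall N : nat,
    \sum_(k < N.+1) den13`_k * ((T13_4 (N - k))%:Z) = num13`_N.
Proof.
move=> N; rewrite (den13_convolution (fun n => (T13_4 n)%:Z)) coef_num13 /=.
have [N_lt12 | N_ge12] := ltnP N 12.
  rewrite !T13_4_strip_count.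
  by case: N N_lt12 => [|[|[|[|[|[|[|[|[|[|[|[|N]]]]]]]]]]]] //; vm_compute.
have [M ->] : exists M, N = (M + 12)%N by exists (N - 12)%N; lia.
have -> : (M + 12 - 4 = M + 8)%N by lia.
have -> : (M + 12 - 8 = M + 4)%N by lia.
have -> : (M + 12 - 12 = M)%N by lia.
have neq c : (c < 12)%N -> (M + 12 == c)%N = false by move=> ?; apply/negbTE; lia.
rewrite !ltn_addl // !mulr1n !neq //.
have := T13_4_rec M; lia.
Qed.
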